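(* Let $t$ be a well-formed tree over $\tilde A_{i,k}$, $\Sigma$ a winning strategy of $P$ in $\mathcal G(t)$, $u\in\Sigma$, and $j$ a $P$-losing number. Then $$s(u,\Sigma){\upharpoonright}j=\sup_{w\in\mathrm{act}_u(\Sigma,j)}\big(s(w,\Sigma){\upharpoonright}j\big)=\sup_{w\in\mathrm{act}_u(\Sigma,j)}\big(s(\varepsilon,\Sigma{\upharpoonright}w){\upharpoonright}j\big),$$ where the empty supremum is the all-zero tuple.
   Context: Fix natural numbers $i<k$. Trees over a ranked alphabet are partial maps $t:\omega^*\to A$ with non-empty prefix-closed domain where a node with an $m$-ary label has exactly the children $u0,\ldots,u(m-1)$; $t{\upharpoonright}u$ is the subtree at $u$, $\preceq$ the prefix order. The alphabet $\tilde A_{i,k}$ has unary letters $p_i,\ldots,p_k$, a unary letter $\sim$, and binary letters $c_1,c_2$. Players $1,2$; $\bar P$ the opponent. Well-formed: no branch has infinitely many $\sim$. A node $u$ is switched if an odd number of strict prefixes $w\prec u$ have $t(w)=\sim$, kept otherwise. The game $\mathcal G(t)$: positions are nodes, moves to children, start at the root; $u$ is controlled by $P$ iff ($u$ kept and $t(u)=c_P$) or ($u$ switched and $t(u)=c_{\bar P}$). An infinite play is won by player 1 iff it is (eventually) kept and the least $j$ with infinitely many nodes labelled $p_j$ is even, or (eventually) switched and this $j$ is odd (take $j=k$ if none occurs infinitely often). A strategy of $P$ is a set $\Sigma\subseteq\mathrm{dom}(t)$ containing the root, prefix-closed, where each $u\in\Sigma$ controlled by $P$ has exactly one child in $\Sigma$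 and every other $u\in\Sigma$ has all children in $\Sigma$; winning if every branch all of whose prefixes lie in $\Sigma$ is won by $P$. For $u\in\Sigma$, $\Sigma{\upharpoonright}u=\{w: uw\in\Sigma\}$; when no strict prefix of $u$ is labelled $\sim$ it is a winning strategy of $P$ in $\mathcal G(t{\upharpoonright}u)$, and $s(\cdot,\Sigma{\upharpoonright}u)$ is computed with respect to the tree $t{\upharpoonright}u$. $P$-losing numbers: $j\in\{i,\ldots,k\}$ odd for $P=1$, even for $P=2$; $i',k'$ least/largest. Tuples $(\theta_{i'},\theta_{i'+2},\ldots,\theta_{k'})$ of countable ordinals are ordered lexicographically (smaller index more significant), suprema in this order; for a $P$-losing $j$, $(\theta_{i'},\ldots,\theta_{k'}){\upharpoonright}j=(\theta_{i'},\ldots,\theta_j)$. A node $u\in\Sigma$ is active if $t(u)=p_j$ for a $P$-losing $j$ and no strict prefix $w\prec u$ has $t(w)=\sim$ or $t(w)=p_{j'}$ with $j'<j$; $\mathrm{act}(\Sigma)$ is the set of active nodes, and $\mathrm{act}_u(\Sigma,j)=\{w\in\mathrm{act}(\Sigma): u\preceq w,\ t(w)=p_{j''}\text{ with }j''\le j\}$. $u\gg w$ iff $u,w\in\Sigma$, $u\prec w$ and some $w'\in\mathrm{act}(\Sigma)$ has $u\preceq w'\preceq w$ (well-founded for winning $\Sigma$). $\mathrm{succ}_u(\Sigma)$ is the set of $\preceq$-minimal elements of $\{w\in\mathrm{act}(\Sigma):u\preceq w\}$. The map $s(\cdot,\Sigma)$ is defined by well-founded recursion along $\gg$: (a) if $u\in\mathrm{act}(\Sigma)$,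 $t(u)=p_j$ and $s(u0,\Sigma)=(\theta_{i'},\ldots,\theta_{k'})$, then $s(u,\Sigma)=(\theta_{i'},\ldots,\theta_{j-2},\theta_j+1,0,\ldots,0)$; (b) if $u\notin\mathrm{act}(\Sigma)$, then $s(u,\Sigma)=\sup_{w\in\mathrm{succ}_u(\Sigma)}s(w,\Sigma)$ (empty supremum $=(0,\ldots,0)$). *)

From mathcomp Require Import all_boot.
From Stdlib Require Import ClassicalEpsilon.

Set Implicit Arguments.
Unset Strict Implicit.
Unset Printing Implicit Defensive.

(* Countable ordinals: Brouwer trees.  OL f denotes sup_n (f n).       *)
Inductive Ord : Type := OZ | OS of Ord | OL of (nat -> Ord).

(* x <= y  (standard order on Brouwer trees, read as ordinals):
   0 <= y;  x'+1 <= y  iff  x' < y;  sup f <= y  iff  all f n <= y;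
   x' < 0 never; x' < y'+1 iff x' <= y'; x' < sup g iff x' < g n for some n. *)
Fixpoint ole (x y : Ord) {struct x} : Prop :=
  match x with
  | OZ => True
  | OS x' =>
      (fix lt (y : Ord) : Prop :=
         match y with
         | OZ => False
         | OS y' => ole x' y'
         | OL g => exists n, lt (g n)
         end) y
  | OL f => forall n, ole (f n) y
  end.

Definition olt (x y : Ord) : Prop := ole (OS x) y.
(* equality of ordinals (Brouwer trees are a representation up to this) *)
Definition oeq (x y : Ord) : Prop := ole x y /\ ole y x.

Inductive player := P1 | P2.
Definition opp (P : player) : player := if P is P1 then P2 else P1.

(* Lp j = p_j, Lsim = ~, Lc P = c_P *)
Inductive label := Lp of nat | Lsim | Lc of player.
Definition arity (a : label) : nat := if a is Lc _ then 2 else 1.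

Definition node := seq nat.
Definition tree := node -> option label.
Definition in_dom (t : tree) (u : node) : Prop := exists a, t u = Some a.

Definition is_tree (i k : nat) (t : tree) : Prop :=
  [/\ in_dom t [::],
      (forall u w, in_dom t (u ++ w) -> in_dom t u),
      (forall u a, t u = Some a -> forall n, in_dom t (rcons u n) <-> n < arity a)
    & (forall u j, t u = Some (Lp j) -> i <= j <= k)].

Definition prefix (u w : node) : Prop := exists v, w = u ++ v.

Definition subtree (t : tree) (u : node) : tree := fun w => t (u ++ w).
Definition subset_at (Sg : node -> Prop) (u : node) : node -> Prop :=
  fun w => Sg (u ++ w).

Definition is_simb (o : option label) : bool :=
  if o is Some Lsim then true else false.

Definition nsim (t : tree) (u : node) : nat :=
  count (fun n => is_simb (t (take n u))) (iota 0 (size u)).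
Definition switched (t : tree) (u : node) : bool := odd (nsim t u).

Definition controlled (t : tree) (P : player) (u : node) : Prop :=
  (~~ switched t u /\ t u = Some (Lc P)) \/
  (switched t u /\ t u = Some (Lc (opp P))).

(* infinite branches: b : nat -> nat, n-th node = first n directions *)
Definition pre (b : nat -> nat) (n : nat) : node := map b (iota 0 n).
Definition branch_in (S : node -> Prop) (b : nat -> nat) : Prop :=
  forall n, S (pre b n).
Definition inf_often (Q : node -> Prop) (b : nat -> nat) : Prop :=
  forall N, exists n, N <= n /\ Q (pre b n).

Definition well_formed (t : tree) : Prop :=
  forall b, branch_in (in_dom t) b -> ~ inf_often (fun u => t u = Some Lsim) b.

Definition inf_p (t : tree) (b : nat -> nat) (j : nat) : Prop :=
  inf_often (fun u => t u = Some (Lp j)) b.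

Definition min_prio (k : nat) (t : tree) (b : nat -> nat) (j : nat) : Prop :=
  (inf_p t b j /\ forall j', j' < j -> ~ inf_p t b j') \/
  (j = k /\ forall j', ~ inf_p t b j').

Definition ev_kept (t : tree) (b : nat -> nat) : Prop :=
  exists N, forall n, N <= n -> ~~ switched t (pre b n).
Definition ev_switched (t : tree) (b : nat -> nat) : Prop :=
  exists N, forall n, N <= n -> switched t (pre b n).

Definition won_by_1 (k : nat) (t : tree) (b : nat -> nat) : Prop :=
  exists j, min_prio k t b j /\
    ((ev_kept t b /\ ~~ odd j) \/ (ev_switched t b /\ odd j)).

Definition won_by (k : nat) (t : tree) (P : player) (b : nat -> nat) : Prop :=
  if P is P1 then won_by_1 k t b else ~ won_by_1 k t b.

Definition is_strategy (t : tree) (P : player) (Sg : node -> Prop) : Prop :=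
  [/\ Sg [::],
      (forall u, Sg u -> in_dom t u),
      (forall u w, Sg (u ++ w) -> Sg u),
      (forall u, Sg u -> controlled t P u ->
         exists n, Sg (rcons u n) /\ forall n', Sg (rcons u n') -> n' = n)
    & (forall u, Sg u -> ~ controlled t P u ->
         forall n, in_dom t (rcons u n) -> Sg (rcons u n))].

Definition winning (k : nat) (t : tree) (P : player) (Sg : node -> Prop) : Prop :=
  is_strategy t P Sg /\ forall b, branch_in Sg b -> won_by k t P b.

Definition losingb (i k : nat) (P : player) (j : nat) : bool :=
  (i <= j <= k) && (if P is P1 then odd j else ~~ odd j).

Definition active (i k : nat) (t : tree) (P : player) (Sg : node -> Prop)
    (u : node) : Prop :=
  Sg u /\ exists j, [/\ t u = Some (Lp j), losingb i k P j &
    forall n, n < size u ->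
      t (take n u) <> Some Lsim /\
      forall j', j' < j -> t (take n u) <> Some (Lp j')].

Definition act_at (i k : nat) (t : tree) (P : player) (Sg : node -> Prop)
    (u : node) (j : nat) (w : node) : Prop :=
  [/\ active i k t P Sg w, prefix u w &
      exists j'', t w = Some (Lp j'') /\ j'' <= j].

Definition succ_at (i k : nat) (t : tree) (P : player) (Sg : node -> Prop)
    (u w : node) : Prop :=
  [/\ active i k t P Sg w, prefix u w &
      forall w', active i k t P Sg w' -> prefix u w' -> prefix w' w -> w' = w].

(* Tuples (theta_{i'}, theta_{i'+2}, ..., theta_{k'}) : only the entries
   at P-losing indices matter.  Truncation |m keeps indices <= m.       *)
Definition tuple := nat -> Ord.

Definition losidx (i k : nat) (P : player) (m : nat) : seq nat :=
  [seq j <- iota i (k.+1 - i) | losingb i k P j && (j <= m)].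

Fixpoint lexle (l : seq nat) (a b : tuple) : Prop :=
  match l with
  | [::] => True
  | j :: l' => olt (a j) (b j) \/ (oeq (a j) (b j) /\ lexle l' a b)
  end.

Definition lexeq (l : seq nat) (a b : tuple) : Prop :=
  forall j, j \in l -> oeq (a j) (b j).

(* x is a (the) supremum of S w.r.t. the lexicographic order on l;
   for empty S this forces x to be the all-zero tuple (up to oeq). *)
Definition is_lub (l : seq nat) (S : tuple -> Prop) (x : tuple) : Prop :=
  (forall y, S y -> lexle l y x) /\
  (forall z, (forall y, S y -> lexle l y z) -> lexle l x z).

Definition bump (j : nat) (th : tuple) : tuple :=
  fun j' => if j' < j then th j' else if j' == j then OS (th j) else OZ.

Definition s_eqs (i k : nat) (P : player) (t : tree) (Sg : node -> Prop)
    (f : node -> tuple) : Prop :=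
  forall u, Sg u ->
    (forall j, active i k t P Sg u -> t u = Some (Lp j) ->
       lexeq (losidx i k P k) (f u) (bump j (f (rcons u 0)))) /\
    (~ active i k t P Sg u ->
       is_lub (losidx i k P k) (fun x => exists w, succ_at i k t P Sg u w /\ x = f w)
              (f u)).

(* s(., Sg): the function defined by well-founded recursion along >>,
   i.e. (a choice of) the solution of the equations (a), (b). *)
Definition s_fun (i k : nat) (P : player) (t : tree) (Sg : node -> Prop) :
    node -> tuple :=
  epsilon (inhabits (fun _ _ => OZ)) (s_eqs i k P t Sg).

(* Along a play consistent with a winning strategy there are only finitely many
   active nodes: their labels never increase, so the least one recurs forever
   while no [~] is ever met, and the play is won by the opponent.  Hence [>>] is
   well founded, the equations (a), (b) have a solution, and every solution
   satisfies the first equality by [>>]-induction: an active node labelled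
   [p_j0] with [j0 <= j] dominates its active descendants once truncated at [j],
   one with [j < j0] is invisible at that truncation, and at an inactive node a
   supremum over the successors of suprema over their active descendants is a
   supremum over all active descendants.  Below an active node [w] the active
   nodes and the equations of [Sg|w] are those of [Sg], which gives the second
   equality.  Lexicographic suprema exist because every coordinate is a
   countable supremum of Brouwer ordinals. *)

From Pilot Require Import Defs.
From mathcomp Require Import all_boot zify.
From Stdlib Require Import Classical ClassicalEpsilon FunctionalExtensionality.
From Stdlib Require Import Inclusion Inverse_Image.

Set Implicit Arguments.
Unset Strict Implicit.
Unset Printing Implicit Defensive.

Lemma ole_OL x f n : ole x (f n) -> ole x (OL f).
Proof. by elim: x => [|x IH|g IH] //= H; [exists n | move=> m; apply: IH]. Qed.

Lemma ole_refl x : ole x x.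
Proof. by elim: x => [|x IH|f IH] //= n; apply: (@ole_OL _ f n). Qed.

Lemma ole_trans x y z : ole x y -> ole y z -> ole x z.
Proof.
elim: x y z => [|x IHx|f IHf] y z //; last by move=> Hf Hz n; apply: IHf (Hf n) Hz.
elim: y z => [|y IHy|g IHg] z //.
- change (ole x y -> olt y z -> olt x z) => Hxy.
  elim: z => [|z IHz|h IHh] //; first exact: IHx Hxy.
  by move=> -[n Hn]; exists n; apply: IHh.
- by change ((exists n, olt x (g n)) -> (forall n, ole (g n) z) -> olt x z) => -[n Hn] Hz;
    apply: IHg (Hz n).
Qed.

Lemma ole_S x : ole x (OS x).
Proof.
elim: x => [|x IH|f IH] //= n.
by apply: ole_trans (IH n) _; apply: (@ole_OL _ f n); apply: ole_refl.
Qed.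

Lemma oltW x y : olt x y -> ole x y.
Proof. exact: ole_trans (ole_S x). Qed.

Lemma olt_irrefl x : ~ olt x x.
Proof.
elim: x => [|x IH|f IH] //.
change ((exists n, olt (OL f) (f n)) -> False) => -[n Hn]; apply: (IH n).
by apply: ole_trans Hn; apply: (@ole_OL _ f n); apply: ole_refl.
Qed.

Lemma olt_geF x y : olt x y -> ole y x -> False.
Proof. by move=> H1 H2; apply: olt_irrefl (ole_trans H1 H2). Qed.

Lemma ole_total x y : ole x y \/ olt y x.
Proof.
elim: x y => [|x IHx|f IHf] y; first by left.
- elim: y => [|y IHy|g IHg]; first by right.
  + exact: IHx.
  + have [|N] := classic (exists n, olt x (g n)); first by left.
    by right=> /= n; have [H|//] := IHg n; case: N; exists n.
- have [[n Hn]|N] := classic (exists n, olt y (f n)); first by right; apply: ole_OL Hn.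
  by left=> n; have [//|H] := IHf n y; case: N; exists n.
Qed.

Lemma oeq_refl x : oeq x x. Proof. by split; apply: ole_refl. Qed.
Lemma oeq_sym x y : oeq x y -> oeq y x. Proof. by case. Qed.
Lemma oeq_trans x y z : oeq x y -> oeq y z -> oeq x z.
Proof. by case=> ? ? [] ? ?; split; apply: ole_trans; eassumption. Qed.

Section Lexicographic.
Variable l : seq nat.

Lemma lexle_refl a : lexle l a a.
Proof. by elim: l => //= j l' IH; right; split=> //; apply: oeq_refl. Qed.

Lemma lexeq_refl a : lexeq l a a.
Proof. by move=> m _; apply: oeq_refl. Qed.

Lemma lexeq_sym a b : lexeq l a b -> lexeq l b a.
Proof. by move=> H m Hm; apply: oeq_sym (H m Hm). Qed.

Lemma lexeq_trans a b c : lexeq l a b -> lexeq l b c -> lexeq l a c.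
Proof. by move=> H1 H2 m Hm; apply: oeq_trans (H1 m Hm) (H2 m Hm). Qed.

Lemma lexle_trans a b c : lexle l a b -> lexle l b c -> lexle l a c.
Proof.
elim: l => //= j l' IH [H1|[H1 H1']] [H2|[H2 H2']].
- by left; apply: ole_trans H1 (oltW H2).
- by left; apply: ole_trans H1 H2.1.
- by left; apply: (ole_trans (_ : olt (a j) (OS (b j))) H2); apply: H1.1.
- by right; split; [apply: oeq_trans H1 H2 | apply: IH].
Qed.

Lemma lexle_anti a b : lexle l a b -> lexle l b a -> lexeq l a b.
Proof.
elim: l => [|j l' IH] /=; first by move=> _ _ m.
move=> [H1|[H1 H1']] [H2|[H2 H2']].
- by case: (olt_geF H1 (oltW H2)).
- by case: (olt_geF H1 H2.1).
- by case: (olt_geF H2 H1.1).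
- by move=> m; rewrite inE => /predU1P[->|]; [|apply: IH].
Qed.

Lemma lexle_lexeq_l a a' b : lexeq l a a' -> lexle l a b -> lexle l a' b.
Proof.
elim: l => //= j l' IH E [H|[H H']].
- by left; apply: ole_trans H; apply: (E j (mem_head _ _)).2.
- right; split; first by apply: oeq_trans (oeq_sym (E j (mem_head _ _))) H.
  by apply: IH H' => m Hm; apply: E; rewrite inE Hm orbT.
Qed.

Lemma lexle_lexeq_r a b b' : lexeq l b b' -> lexle l a b -> lexle l a b'.
Proof.
elim: l => //= j l' IH E [H|[H H']].
- by left; apply: ole_trans H (E j (mem_head _ _)).1.
- right; split; first by apply: oeq_trans H (E j (mem_head _ _)).
  by apply: IH H' => m Hm; apply: E; rewrite inE Hm orbT.
Qed.

End Lexicographic.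

Lemma lexeq_sub l1 l2 a b : {subset l1 <= l2} -> lexeq l2 a b -> lexeq l1 a b.
Proof. by move=> S H m Hm; apply: H (S m Hm). Qed.

Lemma lexle_head j l a b : lexle (j :: l) a b -> ole (a j) (b j).
Proof. by case=> [H|[[H _] _]] //; apply: oltW. Qed.

Definition fam (R : node -> Prop) (F : node -> Defs.tuple) : Defs.tuple -> Prop :=
  fun y => exists w, R w /\ y = F w.

(* Nodes are countable, so [pickle] enumerates the family as a sequence. *)
Definition coord_sup (R : node -> Prop) (F : node -> Defs.tuple) (j : nat) : Ord :=
  OL (fun n => if unpickle n is Some w then
                 if excluded_middle_informative (R w) then F w j else OZ
               else OZ).

Lemma coord_sup_ub R F j w : R w -> ole (F w j) (coord_sup R F j).
Proof.
move=> Rw; apply: (@ole_OL _ _ (pickle w)); cbv beta; rewrite pickleK.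
by case: excluded_middle_informative => [Rw'|//]; apply: ole_refl.
Qed.

Lemma coord_sup_least R F j z :
  (forall w, R w -> ole (F w j) z) -> ole (coord_sup R F j) z.
Proof.
move=> H n; cbv beta; case: (unpickle n) => [w|] //.
by case: excluded_middle_informative => [Rw|//]; apply: H.
Qed.

Definition setj (j : nat) (o : Ord) (x : Defs.tuple) : Defs.tuple :=
  fun m => if m == j then o else x m.

(* The first coordinate is the supremum of the first coordinates; the
   remaining ones are the supremum of the members attaining it. *)
Fixpoint lexsup (l : seq nat) (R : node -> Prop) (F : node -> Defs.tuple) : Defs.tuple :=
  if l is j :: l' then
    setj j (coord_sup R F j)
      (lexsup l' (fun w => R w /\ oeq (F w j) (coord_sup R F j)) F)
  else fun _ => OZ.

Lemma lexsup_lub l R F : uniq l -> is_lub l (fam R F) (lexsup l R F).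
Proof.
elim: l R => [|j l IH] R //= /andP[jNl Ul].
set th := coord_sup R F j; set R' := fun w => R w /\ oeq (F w j) th.
have Eth : setj j th (lexsup l R' F) j = th by rewrite /setj eqxx.
have Etl : lexeq l (lexsup l R' F) (setj j th (lexsup l R' F)).
  move=> m Hm; rewrite /setj; case: eqP => [Emj|_]; last exact: oeq_refl.
  by move: jNl; rewrite -Emj Hm.
split=> [y [w [Rw ->]]|z Hz].
  have [thw|wth] := ole_total th (F w j); last by left; rewrite Eth.
  have R'w : R' w by split=> //; split=> //; apply: coord_sup_ub.
  right; split; first by rewrite Eth; apply: R'w.2.
  by apply: lexle_lexeq_r Etl _; apply: (IH R' Ul).1; exists w.
have thz : ole th (z j).
  by apply: coord_sup_least => w Rw; apply: lexle_head (Hz _ _); exists w.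
have [zth|thz'] := ole_total (z j) th; last by left; rewrite Eth.
right; split; first by rewrite Eth.
apply: lexle_lexeq_l Etl _; apply: (IH R' Ul).2 => y [w [[Rw Ew] ->]].
have [Hlt|[_ //]] := Hz (F w) (ex_intro _ w (conj Rw erefl)).
by case: (olt_geF Hlt (ole_trans zth Ew.2)).
Qed.

Lemma lexsup_cat l1 l2 R F :
  lexeq l1 (lexsup (l1 ++ l2) R F) (lexsup l1 R F).
Proof.
elim: l1 R => [|j l1 IH] R m //=; rewrite inE /setj.
by case: eqP => [_ _|_ /= Hm]; [apply: oeq_refl | apply: IH].
Qed.

Lemma is_lub_lexeq l S x x' : lexeq l x x' -> is_lub l S x -> is_lub l S x'.
Proof.
move=> E [ub least]; split=> [y Sy|z Hz].
- exact: lexle_lexeq_r E (ub y Sy).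
- exact: lexle_lexeq_l E (least z Hz).
Qed.

Lemma is_lub_congr l S1 S2 x1 x2 : is_lub l S1 x1 -> is_lub l S2 x2 ->
  (forall y1, S1 y1 -> exists2 y2, S2 y2 & lexeq l y1 y2) ->
  (forall y2, S2 y2 -> exists2 y1, S1 y1 & lexeq l y1 y2) -> lexeq l x1 x2.
Proof.
move=> [ub1 least1] [ub2 least2] S12 S21; apply: lexle_anti.
- apply: least1 => y1 /S12 [y2 S2y2 E].
  exact: lexle_lexeq_l (lexeq_sym E) (ub2 _ S2y2).
- apply: least2 => y2 /S21 [y1 S1y1 E]; exact: lexle_lexeq_l E (ub1 _ S1y1).
Qed.

Lemma is_lub_unique l S x1 x2 : is_lub l S x1 -> is_lub l S x2 -> lexeq l x1 x2.
Proof.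
by move=> H1 H2; apply: is_lub_congr H1 H2 _ _ => y Sy; exists y => //;
  apply: lexeq_refl.
Qed.

Lemma is_lub_fam_congr l R1 R2 F G x : (forall w, R1 w <-> R2 w) ->
  (forall w, R2 w -> lexeq l (F w) (G w)) ->
  is_lub l (fam R1 F) x -> is_lub l (fam R2 G) x.
Proof.
move=> ER E [ub least]; split=> [y [w [Rw ->]]|z Hz].
- exact: lexle_lexeq_l (E w Rw) (ub _ (ex_intro _ w (conj ((ER w).2 Rw) erefl))).
- apply: least => y [w [/ER Rw ->]].
  exact: lexle_lexeq_l (lexeq_sym (E w Rw)) (Hz _ (ex_intro _ w (conj Rw erefl))).
Qed.

Lemma is_lub_catl l1 l2 R F x : uniq (l1 ++ l2) ->
  is_lub (l1 ++ l2) (fam R F) x -> is_lub l1 (fam R F) x.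
Proof.
move=> U Hx; have U1 : uniq l1 by move: U; rewrite cat_uniq => /andP[].
apply: is_lub_lexeq (lexsup_lub R F U1).
apply: lexeq_trans (lexeq_sym (@lexsup_cat l1 l2 R F)) _.
apply: lexeq_sub (is_lub_unique (lexsup_lub R F U) Hx) => m Hm.
by rewrite mem_cat Hm.
Qed.

Lemma filter_leq_cat (p : pred nat) j s : sorted ltn s ->
  [seq x <- s | p x && (x <= j)] ++ [seq x <- s | p x && (j < x)] =
  [seq x <- s | p x].
Proof.
elim: s => //= x s IH /[dup] /path_sorted Ss /(order_path_min ltn_trans) /allP Sx.
rewrite -(IH Ss); case: (leqP x j) => [xj|jx]; first by rewrite andbT andbF; case: (p x).
have -> : [seq y <- s | p y && (y <= j)] = [::].
  rewrite -(filter_pred0 s); apply: eq_in_filter => y /Sx /= xy.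
  by rewrite leqNgt (ltn_trans jx xy) andbF.
by rewrite andbT andbF; case: (p x).
Qed.

Section LosingIndices.
Variables (i k : nat) (P : player).

Lemma losidx_uniq m : uniq (losidx i k P m).
Proof. by rewrite filter_uniq // iota_uniq. Qed.

Lemma losidx_sorted m : sorted ltn (losidx i k P m).
Proof. by apply: sorted_filter; [apply: ltn_trans | apply: iota_ltn_sorted]. Qed.

Lemma losingb_bounds j : losingb i k P j -> i <= j <= k.
Proof. by case/andP. Qed.

Lemma mem_losidx m j : (j \in losidx i k P m) = losingb i k P j && (j <= m).
Proof.
rewrite mem_filter mem_iota; case Lj: (losingb i k P j) => //=.
by case/andP: (losingb_bounds Lj) => ij jk; case: (j <= m) => //=; lia.
Qed.

Lemma losidx_subk j : {subset losidx i k P j <= losidx i k P k}.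
Proof.
move=> x; rewrite !mem_losidx => /andP[Lx _].
by rewrite Lx; case/andP: (losingb_bounds Lx).
Qed.

Lemma losidx_cat j : exists l, losidx i k P k = losidx i k P j ++ l.
Proof.
exists [seq x <- iota i (k.+1 - i) | losingb i k P x && (x <= k) & j < x].
rewrite -[LHS](filter_leq_cat _ j (iota_ltn_sorted _ _)); congr (_ ++ _).
apply: eq_filter => x /=; case Lx: (losingb i k P x) => //=.
by case/andP: (losingb_bounds Lx) => _ ->.
Qed.

End LosingIndices.

Lemma lexle_bump l a j : sorted ltn l -> j \in l -> lexle l a (Defs.bump j a).
Proof.
elim: l => //= m l IH /[dup] /path_sorted Sl /(order_path_min ltn_trans) /allP Sm.
rewrite inE => /predU1P[<-|jl].
  by left; rewrite /Defs.bump ltnn eqxx; apply: ole_refl.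
by right; split; [rewrite /Defs.bump Sm //; apply: oeq_refl | apply: IH].
Qed.

Lemma lexeq_bump_lt l a j : (forall m, m \in l -> m < j) -> lexeq l a (Defs.bump j a).
Proof. by move=> H m Hm; rewrite /Defs.bump H //; apply: oeq_refl. Qed.

Lemma lexeq_bump l1 l2 j a b : (forall m, m \in l2 -> m <= j -> m \in l1) ->
  lexeq l1 a b -> lexeq l2 (Defs.bump j a) (Defs.bump j b).
Proof.
move=> S E m Hm; rewrite /Defs.bump; case: ltnP => [mj|jm].
  by apply: E; apply: S => //; apply: ltnW.
case: eqP => [Emj|_]; last exact: oeq_refl.
by move: Hm; rewrite Emj => /S /(_ (leqnn j)) /E [].
Qed.

Lemma prefix_neq_size (u w : node) : prefix u w -> u != w -> size u < size w.
Proof.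
case/prefixP=> [[|x v] ->]; first by rewrite cats0 eqxx.
by rewrite size_cat /= addnS ltnS leq_addr.
Qed.

Lemma nth_prefix (u w : node) n : prefix u w -> n < size u -> nth 0 u n = nth 0 w n.
Proof. by case/prefixP=> v -> nu; rewrite nth_cat nu. Qed.

Lemma prefix_size_eq (u w : node) : prefix u w -> size w <= size u -> u = w.
Proof. by case/prefixP=> [[|x v] ->]; rewrite ?cats0 // size_cat /=; lia. Qed.

Lemma size_pre b n : size (pre b n) = n.
Proof. by rewrite size_map size_iota. Qed.

Lemma take_pre b m n : m <= n -> take m (pre b n) = pre b m.
Proof.
by move=> mn; rewrite /pre -map_take take_iota; congr (map _ (iota _ _)); lia.
Qed.

Lemma not_Acc_descending (T : Type) (R : T -> T -> Prop) x :
  ~ Acc R x -> exists c : nat -> T, forall n, R (c n.+1) (c n).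
Proof.
move=> Nx; pose nxt y := epsilon (inhabits x) (fun z => R z y /\ ~ Acc R z).
have nxtP y : ~ Acc R y -> R (nxt y) y /\ ~ Acc R (nxt y).
  move=> Ny; apply: (epsilon_spec (inhabits x) (fun z => R z y /\ ~ Acc R z)).
  apply: NNPP => C; apply: Ny.
  by constructor=> z Rz; apply: NNPP => Nz; apply: C; exists z.
have NAcc n : ~ Acc R (iter n nxt x) by elim: n => //= n /nxtP[].
by exists (fun n => iter n nxt x) => n; apply: (nxtP _ (NAcc n)).1.
Qed.

Lemma prefix_chain_branch (c : nat -> node) :
  (forall n, prefix (c n) (c n.+1) && (size (c n) < size (c n.+1))) ->
  exists b, forall n, pre b (size (c n)) = c n.
Proof.
move=> Hc; have mono n m : n <= m -> prefix (c n) (c m).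
  elim: m => [|m IH]; first by rewrite leqn0 => /eqP->; apply: prefix_refl.
  rewrite leq_eqVlt => /predU1P[->|/IH]; first exact: prefix_refl.
  by move/prefix_trans; apply; case/andP: (Hc m).
have grow n : n <= size (c n).
  by elim: n => // n IH; apply: leq_ltn_trans IH _; case/andP: (Hc n).
exists (fun m => nth 0 (c m.+1) m) => n.
rewrite /pre -[RHS]take_size -(map_nth_iota0 0) //.
apply/eq_in_map => x; rewrite mem_iota => /= xn.
rewrite (nth_prefix (mono x.+1 (maxn n x.+1) (leq_maxr _ _)) (grow x.+1)).
by rewrite (nth_prefix (mono n (maxn n x.+1) (leq_maxl _ _))).
Qed.

Definition prefix_closed (S : node -> Prop) : Prop := forall u w, S (u ++ w) -> S u.

Section Descent.
Variables (S A : node -> Prop).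

(* [descent w u] is the paper's [u >> w] for the active nodes [A]. *)
Definition descent (w u : node) : Prop :=
  [/\ S u, S w, prefix u w, u != w & exists2 a, A a & prefix u a && prefix a w].

Hypothesis S_closed : prefix_closed S.
Hypothesis finitely_many_A : forall b, branch_in S b -> ~ inf_often A b.

Lemma descent_wf : well_founded descent.
Proof.
move=> u; apply: NNPP => Nu; have [c Hc] := not_Acc_descending Nu.
have [|b Hb] := @prefix_chain_branch c.
  by move=> n; have [_ _ p nq _] := Hc n; rewrite p (prefix_neq_size p nq).
have grow n : n <= size (c n).
  elim: n => // n IH; apply: leq_ltn_trans IH _.
  by have [_ _ p nq _] := Hc n; apply: prefix_neq_size.
apply: (finitely_many_A (b := b)) => [m|N].
  have [Sc _ _ _ _] := Hc m; rewrite -(take_pre b (grow m)) Hb.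
  by apply: (S_closed (w := drop m (c m))); rewrite cat_take_drop.
have [_ _ _ _ [a Aa /andP[ca ac]]] := Hc N.
exists (size a); split; first by apply: leq_trans (grow N) (size_prefix ca).
suff -> : pre b (size a) = a by [].
rewrite -(take_pre b (size_prefix ac)) Hb.
by move/prefixP: ac => [v ->]; rewrite take_size_cat.
Qed.

End Descent.

Lemma min_prio_unique k t b j1 j2 : min_prio k t b j1 -> min_prio k t b j2 -> j1 = j2.
Proof.
move=> [[I1 M1]|[-> N1]] [[I2 M2]|[-> N2]] //; [|by case: (N2 _ I1)|by case: (N1 _ I2)].
by case: (ltngtP j1 j2) => // [/M2|/M1]; [case|case].
Qed.

Lemma ex_minimal_nat (Q : nat -> Prop) :
  (exists m, Q m) -> exists m, Q m /\ forall m', Q m' -> m <= m'.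
Proof.
pose q m := if excluded_middle_informative (Q m) then true else false.
have qP m : reflect (Q m) (q m).
  by rewrite /q; case: excluded_middle_informative; constructor.
move=> [m Qm]; have [|n /qP Qn min] := ex_minnP (P := q); first by exists m; apply/qP.
by exists n; split=> // m' /qP; apply: min.
Qed.

Section LosingPlays.
Variables (i k : nat) (P : player) (t : tree).

Definition fresh_losing (w0 a : node) : Prop :=
  exists j, [/\ t a = Some (Lp j), losingb i k P j &
    forall n, size w0 <= n < size a ->
      t (take n a) <> Some Lsim /\ forall j', j' < j -> t (take n a) <> Some (Lp j')].

Lemma kept_losing_lost b m : (forall n, ~~ switched t (pre b n)) ->
  min_prio k t b m -> losingb i k P m -> ~ won_by k t P b.
Proof.
move=> kept Mm /andP[_]; case: P => /= Hm.
- move=> [j [Mj [[_ Ej]|[[N HN] _]]]].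
    by move: Ej; rewrite (min_prio_unique Mj Mm) Hm.
  by move: (HN N (leqnn N)); rewrite (negbTE (kept N)).
- by apply; exists m; split=> //; left; split=> //; exists 0.
Qed.

Variables (b : nat -> nat) (w0 : node).
Hypothesis no_sim_w0 : forall n, n < size w0 -> t (take n w0) <> Some Lsim.
Hypothesis b_w0 : pre b (size w0) = w0.
Hypothesis inf_fresh : inf_often (fresh_losing w0) b.

Lemma fresh_losing_below n n' m : size w0 <= n < n' ->
  fresh_losing w0 (pre b n') -> t (pre b n') = Some (Lp m) ->
  t (pre b n) <> Some Lsim /\ forall j', j' < m -> t (pre b n) <> Some (Lp j').
Proof.
move=> /andP[w0n nn'] [j [-> _ Hj]] [<-].
by rewrite -(take_pre b (ltnW nn')); apply: Hj; rewrite size_pre w0n.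
Qed.

Lemma play_no_sim n : t (pre b n) <> Some Lsim.
Proof.
have [nw0|w0n] := ltnP n (size w0).
  by rewrite -(take_pre b (ltnW nw0)) b_w0; apply: no_sim_w0.
have [n' [nn' [m [Tm Lm Hm]]]] := inf_fresh n.+1.
by apply: (fresh_losing_below (n' := n') _ _ Tm).1; rewrite ?w0n //; exists m.
Qed.

Lemma play_kept n : ~~ switched t (pre b n).
Proof.
rewrite /switched /nsim size_pre (@eq_in_count _ _ pred0) ?count_pred0 //.
move=> n'; rewrite mem_iota => /= n'n; rewrite take_pre 1?ltnW //.
by case E: (t (pre b n')) => [[]|] //; case: (play_no_sim E).
Qed.

(* The least label of a fresh node beyond [w0] recurs forever: labels of later
   fresh nodes cannot exceed it, and nothing smaller occurs beyond [w0]. *)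
Lemma play_min_prio : exists2 m, min_prio k t b m & losingb i k P m.
Proof.
pose Q m := exists n,
  [/\ size w0 <= n, fresh_losing w0 (pre b n) & t (pre b n) = Some (Lp m)].
have fresh_label N : exists n m,
    [/\ N <= n, size w0 <= n, fresh_losing w0 (pre b n) & t (pre b n) = Some (Lp m)].
  have [n [Nn [m [Tm Lm Hm]]]] := inf_fresh (maxn N (size w0)).
  by exists n, m; split; [lia | lia | exists m | ].
have [m0 [[n0 [w0n0 F0 T0]] min0]] : exists m, Q m /\ forall m', Q m' -> m <= m'.
  have [n [m [_ w0n Fn Tn]]] := fresh_label 0.
  by apply: ex_minimal_nat; exists m, n.
exists m0; last by have [j [Tj Lj _]] := F0; move: T0; rewrite Tj => -[<-].
left; split=> [N|j' j'm0 Ij'].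
  have [n [m [Nn w0n Fn Tn]]] := fresh_label (maxn N n0.+1).
  have mm0 : m <= m0.
    rewrite leqNgt; apply/negP => m0m.
    have between : size w0 <= n0 < n by lia.
    exact: ((fresh_losing_below between Fn Tn).2 m0) T0.
  have m0m : m0 <= m by apply: min0; exists n.
  by exists n; split; [lia | have -> : m0 = m by lia].
have [n [w0n Tn]] := Ij' (size w0).
have [n' [m [nn' _ Fn' Tn']]] := fresh_label n.+1.
have m0m : m0 <= m by apply: min0; exists n'; split=> //; lia.
have between : size w0 <= n < n' by lia.
by apply: ((fresh_losing_below between Fn' Tn').2 j') Tn; lia.
Qed.

Lemma fresh_losing_play_lost : ~ won_by k t P b.
Proof. by have [m Mm Lm] := play_min_prio; apply: kept_losing_lost play_kept Mm Lm. Qed.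

End LosingPlays.

Definition p_index (o : option label) : nat := if o is Some (Lp j) then j else 0.

Definition p_single_child (t : tree) (S : node -> Prop) : Prop :=
  forall u j, S u -> t u = Some (Lp j) ->
    S (rcons u 0) /\ forall n, S (rcons u n) -> n = 0.

Section Equations.
Variables (i k : nat) (P : player) (t : tree) (Sg : node -> Prop).
Hypothesis Sg_closed : prefix_closed Sg.
Hypothesis Sg_child : p_single_child t Sg.
Notation act := (active i k t P Sg).
Notation desc := (descent Sg act).

Lemma active_label u : act u -> exists2 j, t u = Some (Lp j) & losingb i k P j.
Proof. by case=> _ [j [Tj Lj _]]; exists j. Qed.

Lemma descent_child u : act u -> desc (rcons u 0) u.
Proof.
move=> Au; have [j Tu _] := active_label Au; have Su : Sg u by case: Au.
split; [done | exact: (Sg_child Su Tu).1 | exact: prefix_rcons | |].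
  by apply/eqP => /(congr1 size); rewrite size_rcons; lia.
by exists u; rewrite ?prefix_refl ?prefix_rcons.
Qed.

Lemma descent_succ u w : Sg u -> ~ act u -> succ_at i k t P Sg u w -> desc w u.
Proof.
move=> Su Nu [Aw /prefixP uw _]; split=> //; first by case: Aw.
  by apply/eqP => E; apply: Nu; rewrite E.
by exists w; rewrite ?uw ?prefix_refl.
Qed.

Lemma prefix_p_child u w j : Sg w -> prefix u w -> u != w -> t u = Some (Lp j) ->
  prefix (rcons u 0) w.
Proof.
move=> Sw /prefixP[v Ew]; subst w; case: v Sw => [|c v] Sw; first by rewrite cats0 eqxx.
move=> _ Tu; have Su : Sg u by apply: (Sg_closed (w := c :: v)).
have Sc : Sg (rcons u c) by apply: (Sg_closed (w := v)); rewrite cat_rcons.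
by rewrite ((Sg_child Su Tu).2 c Sc) -cat_rcons prefix_prefix.
Qed.

Lemma succ_at_below u w' : act w' -> Defs.prefix u w' ->
  exists2 w, succ_at i k t P Sg u w & prefix w w'.
Proof.
move=> Aw' /prefixP uw'.
pose Q m := exists a, [/\ act a, prefix u a, prefix a w' & size a = m].
have [m [[a [Aa ua aw' <-]] min]] : exists m, Q m /\ forall m', Q m' -> m <= m'.
  by apply: ex_minimal_nat; exists (size w'), w'; rewrite prefix_refl.
exists a => //; split=> //; first exact/prefixP.
move=> x Ax /prefixP ux /prefixP xa; apply: (prefix_size_eq xa).
by apply: min; exists x; rewrite (prefix_trans xa aw').
Qed.

Hypothesis desc_wf : well_founded desc.

Definition s_step u (g : forall w, desc w u -> Defs.tuple) : Defs.tuple :=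
  if excluded_middle_informative (act u) is left Au then
    Defs.bump (p_index (t u)) (g _ (descent_child Au))
  else lexsup (losidx i k P k) (succ_at i k t P Sg u)
         (fun w => if excluded_middle_informative (desc w u) is left h then g w h
                   else fun _ => OZ).

Definition s_rec : node -> Defs.tuple := Fix desc_wf (fun _ => Defs.tuple) s_step.

Lemma s_rec_unfold u : s_rec u = @s_step u (fun w _ => s_rec w).
Proof.
apply: Fix_eq => {}u f g E; rewrite /s_step.
case: excluded_middle_informative => [Au|_]; first by rewrite E.
by congr lexsup; apply: functional_extensionality => w;
  case: excluded_middle_informative.
Qed.

Lemma s_rec_eqs : s_eqs i k P t Sg s_rec.
Proof.
move=> u Su; split=> [j Au Tu|Nu]; rewrite s_rec_unfold /s_step.
  by case: excluded_middle_informative => // _; rewrite Tu; apply: lexeq_refl.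
case: excluded_middle_informative => // _.
apply: is_lub_fam_congr (lexsup_lub _ _ (losidx_uniq i k P k)) => // w Sw.
case: excluded_middle_informative => [_|[]]; first exact: lexeq_refl.
exact: descent_succ.
Qed.

Lemma s_fun_eqs : s_eqs i k P t Sg (s_fun i k P t Sg).
Proof. by apply: epsilon_spec; exists s_rec; apply: s_rec_eqs. Qed.

Section Characterisation.
Variable f : node -> Defs.tuple.
Hypothesis f_eqs : s_eqs i k P t Sg f.

Lemma act_at_lub_active u j : act u -> losingb i k P j ->
  is_lub (losidx i k P j) (fam (act_at i k t P Sg (rcons u 0) j) f) (f (rcons u 0)) ->
  is_lub (losidx i k P j) (fam (act_at i k t P Sg u j) f) (f u).
Proof.
move=> Au Lj IH0; have [j0 Tu Lj0] := active_label Au; have Su : Sg u by case: Au.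
have Eu : lexeq (losidx i k P j) (f u) (Defs.bump j0 (f (rcons u 0))).
  exact: lexeq_sub (@losidx_subk i k P j) ((f_eqs Su).1 j0 Au Tu).
have below w : act_at i k t P Sg u j w -> w != u -> act_at i k t P Sg (rcons u 0) j w.
  move=> [Aw /prefixP uw Lw] wu; split=> //; apply/prefixP.
  by apply: prefix_p_child uw _ Tu; [case: Aw | rewrite eq_sym].
have [j0j|jj0] := leqP j0 j.
  split=> [y [w [Hw ->]]|z Hz]; last first.
    apply: Hz; exists u; split=> //; split=> //; last by exists j0.
    by exists [::]; rewrite cats0.
  have [->|wu] := eqVneq w u; first exact: lexle_refl.
  apply: lexle_trans (proj1 IH0 _ (ex_intro _ w (conj (below w Hw wu) erefl))) _.
  apply: lexle_lexeq_r (lexeq_sym Eu) (lexle_bump _ (losidx_sorted i k P j) _).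
  by rewrite mem_losidx Lj0.
apply: is_lub_lexeq (lexeq_trans (lexeq_bump_lt _ _) (lexeq_sym Eu)) _.
  by move=> m; rewrite mem_losidx => /andP[_ mj]; apply: leq_ltn_trans jj0.
apply: is_lub_fam_congr IH0 => [w|w _]; last exact: lexeq_refl.
split=> [[Aw /prefixP u0w Lw]|Hw]; last first.
  apply: (below _ Hw); apply/eqP => wu; move: Hw => [_ _ [j' []]].
  by rewrite wu Tu => -[<-]; lia.
split=> //; apply/prefixP; exact: prefix_trans (prefix_rcons u 0) u0w.
Qed.

Lemma act_at_lub_inactive u j : Sg u -> ~ act u -> losingb i k P j ->
  (forall w, succ_at i k t P Sg u w ->
     is_lub (losidx i k P j) (fam (act_at i k t P Sg w j) f) (f w)) ->
  is_lub (losidx i k P j) (fam (act_at i k t P Sg u j) f) (f u).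
Proof.
move=> Su Nu Lj IH; have [l Ek] := losidx_cat i k P j.
have Hsup : is_lub (losidx i k P j) (fam (succ_at i k t P Sg u) f) (f u).
  apply: (@is_lub_catl _ l); rewrite -Ek; first exact: losidx_uniq.
  exact: (f_eqs Su).2.
split=> [y [x [[Ax ux Lx] ->]]|z Hz].
  have [w Sw wx] := succ_at_below Ax ux.
  apply: lexle_trans (proj1 (IH w Sw) _ _) _.
    by exists x; split=> //; split=> //; apply/prefixP.
  exact: (proj1 Hsup _ (ex_intro _ w (conj Sw erefl))).
apply: (proj2 Hsup) => y [w [Sw ->]].
apply: (proj2 (IH w Sw)) => y' [x [[Ax wx Lx] ->]].
apply: Hz; exists x; split=> //; split=> //; apply/prefixP.
by case: Sw => _ /prefixP uw _; move/prefixP: wx; apply: prefix_trans.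
Qed.

Lemma act_at_lub u j : Sg u -> losingb i k P j ->
  is_lub (losidx i k P j) (fam (act_at i k t P Sg u j) f) (f u).
Proof.
elim: (desc_wf u) j => {}u _ IH j Su Lj.
have [Au|Nu] := classic (act u).
  have D0 := descent_child Au; have [_ Su0 _ _ _] := D0.
  by apply: act_at_lub_active => //; apply: IH.
apply: act_at_lub_inactive => // w Sw.
have Dw := descent_succ Su Nu Sw; have [_ Sw' _ _ _] := Dw.
exact: IH.
Qed.

End Characterisation.

End Equations.

Lemma prefix_closed_subset_at S w : prefix_closed S -> prefix_closed (subset_at S w).
Proof. by move=> S_closed u v; rewrite /subset_at catA; apply: S_closed. Qed.

Lemma p_single_child_subtree t S w :
  p_single_child t S -> p_single_child (subtree t w) (subset_at S w).
Proof.
move=> S_child u j Su Tu; have [S0 S0_only] := S_child _ _ Su Tu.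
by split=> [|n]; rewrite /subset_at -rcons_cat //; apply: S0_only.
Qed.

Section WinningStrategy.
Variables (i k : nat) (P : player) (t : tree) (Sg : node -> Prop).
Hypothesis t_tree : is_tree i k t.
Hypothesis Sg_win : winning k t P Sg.

Lemma winning_prefix_closed : prefix_closed Sg.
Proof. by case: Sg_win => -[]. Qed.

(* A [p_j]-node is never controlled, so [Sg] contains all its children. *)
Lemma winning_p_single_child : p_single_child t Sg.
Proof.
move=> u j Su Tu; case: Sg_win => -[_ Sg_dom _ _ Sg_free] _.
case: t_tree => _ _ t_arity _.
have Nc : ~ controlled t P u by rewrite /controlled Tu => -[[_ E]|[_ E]].
split; first by apply: Sg_free => //; apply/(t_arity _ _ Tu).
by move=> n /Sg_dom /(t_arity _ _ Tu) /=; lia.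
Qed.

Definition active_from (w0 a : node) : Prop :=
  [/\ Sg a, prefix w0 a & fresh_losing i k P t w0 a].

Lemma active_from_wf w0 : (forall n, n < size w0 -> t (take n w0) <> Some Lsim) ->
  well_founded (descent Sg (active_from w0)).
Proof.
move=> no_sim; apply: descent_wf winning_prefix_closed _ => b Bb Inf.
apply: (fresh_losing_play_lost (i := i) no_sim _ _ (Sg_win.2 b Bb)); last first.
  by move=> N; have [n [Nn [_ _ Fn]]] := Inf N; exists n.
have [n [_ [_ /[dup] w0n /size_prefix]]] := Inf 0; rewrite size_pre => w0_n _.
by rewrite -(take_pre b w0_n); case/prefixP: w0n => v ->; rewrite take_size_cat.
Qed.

Lemma active_subtree_from w v :
  active i k (subtree t w) P (subset_at Sg w) v -> active_from w (w ++ v).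
Proof.
move=> [Sv [j [Tv Lj Hv]]]; split=> //; first exact: prefix_prefix.
exists j; split=> // n; rewrite size_cat take_cat => /andP[wn nwv].
by rewrite ltnNge wn; apply: Hv; lia.
Qed.

Lemma subtree_descent_wf w : (forall n, n < size w -> t (take n w) <> Some Lsim) ->
  well_founded (descent (subset_at Sg w) (active i k (subtree t w) P (subset_at Sg w))).
Proof.
move=> no_sim; apply: wf_incl (wf_inverse_image _ _ _ (cat w) (active_from_wf no_sim)).
move=> v' v [Sv Sv' vv' nv [a Aa /andP[va av']]]; split=> //.
- by rewrite prefix_catr // eqxx.
- by rewrite eqseq_cat // eqxx.
- by exists (w ++ a); [apply: active_subtree_from | rewrite !prefix_catr // eqxx va].
Qed.

Lemma winning_descent_wf : well_founded (descent Sg (active i k t P Sg)).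
Proof. exact: (@subtree_descent_wf [::]). Qed.

Lemma winning_s_fun_eqs : s_eqs i k P t Sg (s_fun i k P t Sg).
Proof.
exact: (s_fun_eqs winning_p_single_child winning_descent_wf).
Qed.

Section ActiveSubtree.
Variables (w : node) (jw : nat).
Hypothesis w_active : active i k t P Sg w.
Hypothesis t_w : t w = Some (Lp jw).

Notation ts := (subtree t w).
Notation Ss := (subset_at Sg w).

Lemma active_no_sim : forall n, n < size w -> t (take n w) <> Some Lsim.
Proof. by case: w_active => _ [j [_ _ Hw]] n /Hw[]. Qed.

Lemma subtree_s_fun_eqs : s_eqs i k P ts Ss (s_fun i k P ts Ss).
Proof.
apply: s_fun_eqs; first exact/p_single_child_subtree/winning_p_single_child.
exact: subtree_descent_wf active_no_sim.
Qed.

Lemma active_extension_label v j : active i k t P Sg (w ++ v) ->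
  t (w ++ v) = Some (Lp j) -> j <= jw.
Proof.
case: v => [|c v]; first by rewrite cats0 t_w => _ [->].
move=> [_ [j' [-> _ H]]] [<-]; rewrite leqNgt; apply/negP => jwj'.
have := (H (size w) _).2 jw jwj'; rewrite size_cat /= take_size_cat //.
by apply; rewrite // addnS ltnS leq_addr.
Qed.

Lemma active_subtreeE v j : t (w ++ v) = Some (Lp j) -> j <= jw ->
  active i k ts P Ss v <-> active i k t P Sg (w ++ v).
Proof.
move=> Tv jjw; split=> [[Sv [j' [Tv' Lj' H]]]|[Sv [j' [Tv' Lj' H]]]].
  move: Tv'; rewrite /subtree Tv => -[Ej']; subst j'.
  split=> //; exists j; split=> // n.
  rewrite size_cat take_cat => nwv; case: (ltnP n (size w)) => [nw|wn]; last first.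
    by apply: H; lia.
  have [_ [jw' [Tw' _ Hw]]] := w_active; move: Tw'; rewrite t_w => -[Ejw]; subst jw'.
  by have [? Hlt] := Hw n nw; split=> // j'' j''j; apply: Hlt; lia.
split=> //; exists j'; split=> // n nv.
have E : take (size w + n) (w ++ v) = w ++ take n v.
  by rewrite take_cat ltnNge leq_addr addKn.
by have := H (size w + n); rewrite size_cat E; apply; rewrite ltn_add2l.
Qed.

Lemma act_at_subtreeE v j v' : j <= jw ->
  act_at i k ts P Ss v j v' <-> act_at i k t P Sg (w ++ v) j (w ++ v').
Proof.
move=> jjw; split=> [[Av' vv' [j'' [Tv' j''j]]]|[Av' wvv' [j'' [Tv' j''j]]]].
  split; [|by case: vv' => x ->; exists x; rewrite catA | by exists j''].
  by apply/(active_subtreeE Tv'); first lia.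
split; [|by move/prefixP: wvv'; rewrite prefix_catr // eqxx => /prefixP | by exists j''].
by apply/(active_subtreeE Tv'); first lia.
Qed.

Lemma act_at_extension v j y : j <= jw -> act_at i k t P Sg (w ++ v) j y ->
  exists2 v', y = w ++ v' & act_at i k ts P Ss v j v'.
Proof.
move=> jjw Hy; have [_ [x Ey] _] := Hy; exists (v ++ x); first by rewrite catA.
by apply/act_at_subtreeE; rewrite // catA -Ey.
Qed.

Lemma descent_extension v v' : active i k t P Sg (w ++ v) -> Sg (w ++ v') ->
  prefix (rcons v 0) v' -> descent Sg (active i k t P Sg) (w ++ v') (w ++ v).
Proof.
move=> Av Sv' v0v'; have Sv : Sg (w ++ v) by case: Av.
have vv' : prefix v v' := prefix_trans (prefix_rcons v 0) v0v'.
split=> //; first by rewrite prefix_catr // eqxx.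
  rewrite eqseq_cat // eqxx /=; apply/eqP => Ev; move: (size_prefix v0v').
  by rewrite -Ev size_rcons ltnn.
by exists (w ++ v); rewrite ?prefix_refl // prefix_catr // eqxx.
Qed.

(* Induction along [>>]: at an active node both sides are [bump j] of the value
   at the child [u0], which by [act_at_lub] are suprema over the same active
   descendants. *)
Lemma s_fun_subtree v : active i k t P Sg (w ++ v) ->
  lexeq (losidx i k P k) (s_fun i k P ts Ss v) (s_fun i k P t Sg (w ++ v)).
Proof.
elim: (wf_inverse_image _ _ _ (cat w) winning_descent_wf v) => {}v _ IH Av.
have [j Tv Lj] := active_label Av; have jjw := active_extension_label Av Tv.
have Sv : Sg (w ++ v) by case: Av.
have Sv0 : Sg (w ++ rcons v 0).
  by rewrite -rcons_cat; apply: (winning_p_single_child Sv Tv).1.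
apply: lexeq_trans ((subtree_s_fun_eqs Sv).1 j ((active_subtreeE Tv jjw).2 Av) Tv) _.
apply: lexeq_trans (lexeq_sym ((winning_s_fun_eqs Sv).1 j Av Tv)).
apply: (lexeq_bump (l1 := losidx i k P j)) => [m|].
  by rewrite !mem_losidx => /andP[-> _] ->.
have sup_ts := act_at_lub (prefix_closed_subset_at (w := w) winning_prefix_closed)
  (p_single_child_subtree (w := w) winning_p_single_child)
  (subtree_descent_wf active_no_sim) subtree_s_fun_eqs Sv0 Lj.
have := act_at_lub winning_prefix_closed winning_p_single_child winning_descent_wf
  winning_s_fun_eqs Sv0 Lj; rewrite -rcons_cat => sup_t.
have step v' : act_at i k ts P Ss (rcons v 0) j v' ->
    lexeq (losidx i k P j) (s_fun i k P ts Ss v') (s_fun i k P t Sg (w ++ v')).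
  move=> Hv'; have [Av' /prefixP v0v' _] := (act_at_subtreeE _ _ jjw).1 Hv'.
  apply: lexeq_sub (@losidx_subk i k P j) (IH v' _ Av').
  apply: descent_extension => //; first by case: Av'.
  by move: v0v'; rewrite prefix_catr // eqxx.
apply: (is_lub_congr sup_ts sup_t) => [y [v' [Hv' ->]]|y [x [Hx ->]]].
  exists (s_fun i k P t Sg (w ++ v')); last exact: step.
  by exists (w ++ v'); split=> //; rewrite rcons_cat; apply/act_at_subtreeE.
move: Hx; rewrite rcons_cat => Hx; have [v' -> Hv'] := act_at_extension jjw Hx.
by exists (s_fun i k P ts Ss v'); [exists v' | apply: step].
Qed.

End ActiveSubtree.

Lemma s_fun_active_subtree w : active i k t P Sg w ->
  lexeq (losidx i k P k) (s_fun i k P (subtree t w) (subset_at Sg w) [::])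
    (s_fun i k P t Sg w).
Proof.
move=> Aw; have [jw Tw _] := active_label Aw.
by have := @s_fun_subtree w jw Aw Tw [::]; rewrite cats0; apply.
Qed.

End WinningStrategy.

Unset Implicit Arguments.

Theorem mainTheorem10 (i k : nat) (hik : i < k) (P : player) (t : tree)
    (Sg : node -> Prop) (u : node) (j : nat) :
  is_tree i k t -> well_formed t -> winning k t P Sg -> Sg u ->
  losingb i k P j ->
  is_lub (losidx i k P j)
    (fun x => exists w, act_at i k t P Sg u j w /\ x = s_fun i k P t Sg w)
    (s_fun i k P t Sg u) /\
  is_lub (losidx i k P j)
    (fun x => exists w, act_at i k t P Sg u j w /\
                        x = s_fun i k P (subtree t w) (subset_at Sg w) [::])
    (s_fun i k P t Sg u).
Proof.
move=> t_tree _ Sg_win Su Lj.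
have sup_act := act_at_lub (winning_prefix_closed Sg_win)
  (winning_p_single_child t_tree Sg_win) (winning_descent_wf i Sg_win)
  (winning_s_fun_eqs t_tree Sg_win) Su Lj.
split=> //; apply: is_lub_fam_congr sup_act => // w [Aw _ _].
apply: lexeq_sub (@losidx_subk i k P j) (lexeq_sym _).
exact: s_fun_active_subtree.
Qed.
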